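(* For all integers $n\ge 0$, $$\left\lfloor \frac{\varphi+2}{5}\,n\right\rfloor \le a(n)\le \lfloor \varphi n\rfloor .$$
   Context: $\varphi=(1+\sqrt5)/2$. Let $(F_n)_{n\ge 0}$ be the Fibonacci numbers: $F_0=0$, $F_1=1$, $F_n=F_{n-1}+F_{n-2}$ for $n\ge 2$. Define $(a(n))_{n\ge 0}$ (OEIS A105774) by $a(0)=0$, $a(1)=1$, and for $n\ge 2$, $a(n)=F_{j+1}-a(n-F_j)$, where $j\ge 2$ is the unique index with $F_j<n\le F_{j+1}$. *)

From Stdlib Require Import Reals ZArith Arith Lia.
Open Scope R_scope.

Fixpoint fib (n : nat) : nat :=
  match n with
  | O => 0
  | S m => match m with
           | O => 1
           | S k => fib m + fib k
           end
  end%nat.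

Fixpoint fib_index_from (fuel start n : nat) : nat :=
  match fuel with
  | O => start
  | S f => if Nat.leb n (fib (S start)) then start
           else fib_index_from f (S start) n
  end.

(* For n >= 2: the unique j >= 2 with F_j < n <= F_(j+1)
   (= the least j >= 2 with n <= F_(j+1); fuel n suffices since F_(n+1) >= n). *)
Definition fib_index (n : nat) : nat := fib_index_from n 2 n.

(* a(n) (OEIS A105774), computed with fuel (each recursive call strictly
   decreases the argument, since F_j >= 1, so fuel n is enough).
   Values are in Z so that the subtraction is the true integer subtraction. *)
Fixpoint a_aux (fuel n : nat) : Z :=
  match fuel with
  | O => 0%Z
  | S f =>
    match n with
    | O => 0%Z
    | S O => 1%Z
    | _ => let j := fib_index n in
           (Z.of_nat (fib (S j)) - a_aux f (n - fib j))%Z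
    end
  end.

Definition a (n : nat) : Z := a_aux n n.

Definition phi : R := (1 + sqrt 5) / 2.

(* floor x : Int_part x = up x - 1 is the floor of x in Stdlib. *)
Definition floorR (x : R) : Z := Int_part x.

From Stdlib Require Import Reals ZArith Lia Lra Psatz.
Open Scope R_scope.

(* Write n = F_j + m with 1 <= m <= F_(j-1), so that a n = F_(j+1) - a m and
   theta := (phi + 2) / 5.  The lower gap theta n - a n on the block (F_j, F_(j+1)]
   is then controlled by how large a m + theta m is on [1, F_(j-1)], which is in
   turn controlled by the lower gap on earlier blocks.  The only error entering this
   cycle is theta L_(j-1) - F_j (L the Lucas numbers), a multiple of (1 - phi)^j,
   so a tolerance growing geometrically towards 7/10 propagates: the lower gap
   never exceeds 7/10 < 1, which is the lower bound.  As 7/10 < theta it also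
   forces a m >= 1, whence a n <= F_(j+1) - 1 <= phi F_j <= phi n. *)

Lemma fib_SS n : fib (S (S n)) = (fib (S n) + fib n)%nat.
Proof. reflexivity. Qed.

Lemma fib_succ_ge n : (1 <= fib (S n) /\ n <= fib (S n))%nat.
Proof.
  induction n as [n IH] using lt_wf_ind.
  destruct n as [|[|n]]; [simpl; lia | simpl; lia |].
  rewrite fib_SS.
  pose proof (IH (S n) ltac:(lia)); pose proof (IH n ltac:(lia)); lia.
Qed.

Lemma fib_le_succ n : (fib n <= fib (S n))%nat.
Proof. destruct n; [simpl; lia | rewrite fib_SS; lia]. Qed.

Lemma fib_monotone m n : (m <= n)%nat -> (fib m <= fib n)%nat.
Proof. induction 1; [lia | pose proof (fib_le_succ m0); lia]. Qed.

Lemma fib_index_from_correct fuel start n j :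
  (start <= j)%nat -> (forall i, (start <= i < j)%nat -> (fib (S i) < n)%nat) ->
  (n <= fib (S j))%nat -> (j - start <= fuel)%nat ->
  fib_index_from fuel start n = j.
Proof.
  revert start; induction fuel as [|fuel IH]; intros start Hj Hlt Hle Hfuel; cbn [fib_index_from].
  - lia.
  - destruct (Nat.leb_spec n (fib (S start))) as [Hn|Hn].
    + destruct (Nat.eq_dec start j) as [|Hne]; [easy|].
      specialize (Hlt start ltac:(lia)); lia.
    + assert (start <> j) by (intros ->; lia).
      apply IH; [lia | intros i Hi; apply Hlt; lia | lia | lia].
Qed.

Lemma fib_index_correct j n :
  (2 <= j)%nat -> (fib j < n <= fib (S j))%nat -> fib_index n = j.
Proof.
  intros Hj Hn. destruct j as [|j]; [lia|].
  pose proof (fib_succ_ge j).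
  apply fib_index_from_correct; [lia | | lia | lia].
  intros i Hi. pose proof (fib_monotone (S i) (S j) ltac:(lia)); lia.
Qed.

Lemma fib_index_from_ge fuel start n : (start <= fib_index_from fuel start n)%nat.
Proof.
  revert start; induction fuel as [|fuel IH]; intros start; cbn [fib_index_from]; [lia|].
  destruct (Nat.leb n (fib (S start))); [lia | specialize (IH (S start)); lia].
Qed.

Lemma a_aux_fuel_irrelevant f g n :
  (n <= f)%nat -> (n <= g)%nat -> a_aux f n = a_aux g n.
Proof.
  revert g n; induction f as [|f IH]; intros g n Hf Hg.
  - replace n with 0%nat by lia. now destruct g.
  - destruct g as [|g]; [now replace n with 0%nat by lia|].
    destruct n as [|[|n]]; try reflexivity. cbn [a_aux].
    assert (Hj := fib_index_from_ge (S (S n)) 2 (S (S n))).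
    unfold fib_index. destruct (fib_index_from (S (S n)) 2 (S (S n))) as [|j]; [lia|].
    pose proof (fib_succ_ge j).
    f_equal. apply IH; lia.
Qed.

Lemma a_rec j m : (2 <= j)%nat -> (fib j < m <= fib (S j))%nat ->
  a m = (Z.of_nat (fib (S j)) - a (m - fib j))%Z.
Proof.
  intros Hj Hm. destruct j as [|j]; [lia|]. pose proof (fib_succ_ge j).
  destruct m as [|[|m]]; try lia.
  change (a (S (S m))) with
    (Z.of_nat (fib (S (fib_index (S (S m))))) - a_aux (S m) (S (S m) - fib (fib_index (S (S m)))))%Z.
  rewrite (fib_index_correct (S j)) by lia.
  f_equal. apply a_aux_fuel_irrelevant; lia.
Qed.

Lemma fib_block n : (2 <= n)%nat ->
  exists j, (2 <= j)%nat /\ (fib j < n <= fib (S j))%nat.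
Proof.
  induction n as [|n IH]; intros Hn; [lia|].
  destruct (Nat.eq_dec n 1) as [->|]; [exists 2%nat; cbn; lia|].
  destruct IH as [j [Hj Hblock]]; [lia|].
  destruct (le_lt_dec (S n) (fib (S j))).
  - exists j; lia.
  - exists (S j). rewrite (fib_SS j). split; [lia|].
    destruct j as [|j]; [lia|]. pose proof (fib_succ_ge j); lia.
Qed.

Lemma phi_sq : phi * phi = phi + 1.
Proof. unfold phi. pose proof (sqrt_sqrt 5 ltac:(lra)). nra. Qed.

Lemma phi_bounds : 3/2 < phi < 13/8.
Proof.
  pose proof (sqrt_sqrt 5 ltac:(lra)). pose proof (sqrt_pos 5).
  unfold phi. split; nra.
Qed.

Definition psi : R := 1 - phi.

Lemma fib_like_decay (x : nat -> R) :
  (forall i, x (S (S i)) = x (S i) + x i) -> x 1%nat = psi * x 0%nat ->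
  forall i, Rabs (x i) <= Rabs (x 0%nat) * (5/8) ^ i.
Proof.
  intros Hrec H1.
  assert (Heigen : forall i, x (S i) = psi * x i).
  { induction i as [|i IH]; [exact H1|].
    assert (Hpsi2 : psi * psi = psi + 1) by (unfold psi; pose proof phi_sq; lra).
    rewrite Hrec, IH, <- Rmult_assoc, Hpsi2; ring. }
  assert (Hpsi : Rabs psi <= 5/8)
    by (unfold psi; pose proof phi_bounds; apply Rabs_le; lra).
  induction i as [|i IH]; [simpl; lra|].
  rewrite Heigen, Rabs_mult, <- tech_pow_Rmult.
  pose proof (Rabs_pos psi). pose proof (Rabs_pos (x i)). nra.
Qed.

Lemma fib_phi_error i : Rabs (INR (fib (S i)) - phi * INR (fib i)) <= 1.
Proof.
  set (x i := INR (fib (S i)) - phi * INR (fib i)).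
  assert (Hx : Rabs (x i) <= Rabs (x 0%nat) * (5/8) ^ i).
  { apply fib_like_decay.
    - intros k. unfold x. rewrite !fib_SS, !plus_INR. ring.
    - unfold x, psi. simpl. ring. }
  assert (Hx0 : Rabs (x 0%nat) = 1)
    by (unfold x; simpl; rewrite Rmult_0_r, Rminus_0_r; apply Rabs_R1).
  assert (Hpow : (5/8) ^ i <= 1)
    by (clear; induction i; simpl; [lra | pose proof (pow_le (5/8) i); nra]).
  rewrite Hx0 in Hx. unfold x in Hx. lra.
Qed.

Definition theta : R := (phi + 2) / 5.

Lemma theta_bounds : 7/10 < theta < 29/40.
Proof. unfold theta. pose proof phi_bounds. lra. Qed.

Lemma lucas_theta_error i :
  Rabs (theta * INR (fib (S (S i)) + fib i) - INR (fib (S (S i)))) <= 3/10 * (5/8) ^ i.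
Proof.
  set (x i := theta * INR (fib (S (S i)) + fib i) - INR (fib (S (S i)))).
  assert (Hx : Rabs (x i) <= Rabs (x 0%nat) * (5/8) ^ i).
  { apply fib_like_decay.
    - intros k. unfold x. rewrite !(fib_SS (S (S k))), !(fib_SS (S k)), !(fib_SS k).
      rewrite !plus_INR. ring.
    - unfold x, psi, theta. simpl. pose proof phi_sq. nra. }
  assert (Hx0 : Rabs (x 0%nat) <= 3/10).
  { unfold x. simpl. pose proof theta_bounds. apply Rabs_le. lra. }
  apply (Rle_trans _ _ _ Hx), Rmult_le_compat_r; [apply pow_le; lra | exact Hx0].
Qed.

Definition lower_gap_le (k : nat) (t : R) : Prop :=
  forall m, (1 <= m <= fib k)%nat -> theta * INR m - IZR (a m) <= t.

(* As [a (F_(k+2) + m) = F_(k+3) - a m] for [1 <= m <= F_(k+1)], this is a lower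
   gap bound on the block (F_(k+2), F_(k+3)], up to the error of [lucas_theta_error]. *)
Definition upper_gap_le (k : nat) (t : R) : Prop :=
  forall m, (1 <= m <= fib (S k))%nat ->
    IZR (a m) + theta * INR m <= INR (fib (S k)) + theta * INR (fib k) + t.

Lemma a_rec_real p m : (fib (S (S p)) < m <= fib (S (S (S p))))%nat ->
  (1 <= m - fib (S (S p)) <= fib (S p))%nat /\
  IZR (a m) = INR (fib (S (S p))) + INR (fib (S p)) - IZR (a (m - fib (S (S p)))) /\
  INR m = INR (fib (S (S p))) + INR (m - fib (S (S p))).
Proof.
  intros Hm. pose proof (fib_SS (S p)). split; [lia|]. split.
  - rewrite (a_rec (S (S p)) m) by lia.
    rewrite minus_IZR, <- INR_IZR_INZ, fib_SS, plus_INR. reflexivity.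
  - rewrite <- plus_INR. f_equal. lia.
Qed.

Lemma lower_gap_step p l u t :
  lower_gap_le (S (S p)) l -> upper_gap_le p u -> l <= t ->
  theta * INR (fib (S (S p)) + fib p) - INR (fib (S (S p))) + u <= t ->
  lower_gap_le (S (S (S p))) t.
Proof.
  intros Hl Hu Hlt Hut m Hm.
  destruct (le_lt_dec m (fib (S (S p)))) as [Hle|Hlt'].
  - specialize (Hl m ltac:(lia)). lra.
  - destruct (a_rec_real p m ltac:(lia)) as (Hm' & Ea & Em).
    specialize (Hu _ Hm'). rewrite plus_INR in Hut.
    rewrite Ea, Em. rewrite (fib_SS p), plus_INR in *. lra.
Qed.

Lemma upper_gap_step p u l t :
  upper_gap_le (S p) u -> lower_gap_le (S p) l -> u <= t -> l <= t ->
  upper_gap_le (S (S p)) t.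
Proof.
  intros Hu Hl Hut Hlt m Hm.
  destruct (le_lt_dec m (fib (S (S p)))) as [Hle|Hlt'].
  - specialize (Hu m ltac:(lia)).
    pose proof (fib_le_succ (S p)) as M1. pose proof (fib_le_succ (S (S p))) as M2.
    apply le_INR in M1, M2. pose proof theta_bounds. nra.
  - destruct (a_rec_real p m ltac:(lia)) as (Hm' & Ea & Em).
    specialize (Hl _ Hm'). rewrite Ea, Em, (fib_SS (S p)), plus_INR. lra.
Qed.

(* Going once around lower gap -> upper gap -> lower gap advances the index by 4
   and adds a Lucas error of at most 3/10 (5/8)^k, which [tol (k+4) - tol k]
   covers; the limit 7/10 stays below theta. *)
Definition tol (k : nat) : R := 7/10 - 3/5 * (5/8) ^ k.

Definition gaps_ok (k : nat) : Prop :=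
  lower_gap_le k (tol (S (S k))) /\ upper_gap_le k (tol (S k)).

Lemma tol_le_succ k : tol k <= tol (S k).
Proof. unfold tol. simpl. pose proof (pow_le (5/8) k). lra. Qed.

Lemma gaps_ok_step p : gaps_ok p -> gaps_ok (S (S p)) -> gaps_ok (S (S (S p))).
Proof.
  intros [_ Hu] [Hl2 Hu2]. split.
  - apply (lower_gap_step p _ _ _ Hl2 Hu); [apply tol_le_succ|].
    pose proof (Rle_trans _ _ _ (Rle_abs _) (lucas_theta_error p)).
    pose proof (pow_le (5/8) p). unfold tol. cbn [pow]. lra.
  - apply (upper_gap_step (S p) _ _ _ Hu2 Hl2); [apply tol_le_succ | lra].
Qed.

Lemma a_small : a 1 = 1%Z /\ a 2 = 1%Z /\ a 3 = 2%Z.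
Proof. repeat split; reflexivity. Qed.

Lemma gaps_ok_base k : (1 <= k <= 3)%nat -> gaps_ok k.
Proof.
  intros Hk. destruct a_small as (A1 & A2 & A3). pose proof theta_bounds.
  split; intros m Hm; unfold tol;
    (destruct k as [|[|[|[|k]]]]; [lia | | | | lia]); simpl in Hm |- *;
    (destruct m as [|[|[|[|m]]]]; [lia | | | | lia]);
    try lia; rewrite ?A1, ?A2, ?A3; simpl; lra.
Qed.

Lemma gaps_ok_all k : (1 <= k)%nat -> gaps_ok k.
Proof.
  induction k as [k IH] using lt_wf_ind. intros Hk.
  destruct (le_lt_dec k 3); [apply gaps_ok_base; lia|].
  destruct k as [|[|[|[|p]]]]; try lia.
  apply (gaps_ok_step (S p)); apply IH; lia.
Qed.

Lemma a_lower n : theta * INR n - IZR (a n) <= 7/10.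
Proof.
  destruct n as [|n]; [unfold a; simpl; lra|].
  destruct (gaps_ok_all (S (S n)) ltac:(lia)) as [Hl _].
  pose proof (fib_succ_ge (S n)).
  specialize (Hl (S n) ltac:(lia)). unfold tol in Hl.
  pose proof (pow_le (5/8) (S (S (S (S n))))). lra.
Qed.

Lemma a_ge1 m : (1 <= m)%nat -> (1 <= a m)%Z.
Proof.
  intros Hm. pose proof (a_lower m). pose proof theta_bounds.
  apply le_INR in Hm. simpl in Hm.
  assert (0 < IZR (a m)) by nra. apply lt_IZR in H1. lia.
Qed.

Lemma a_upper n : IZR (a n) <= phi * INR n.
Proof.
  pose proof phi_bounds.
  destruct (le_lt_dec 2 n) as [Hn|Hn].
  - destruct (fib_block n Hn) as [j [Hj Hblock]].
    rewrite (a_rec j n Hj Hblock), minus_IZR, <- INR_IZR_INZ.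
    pose proof (a_ge1 (n - fib j) ltac:(lia)) as Ha. apply IZR_le in Ha.
    pose proof (Rle_trans _ _ _ (Rle_abs _) (fib_phi_error j)).
    assert (INR (fib j) <= INR n) by (apply le_INR; lia). nra.
  - destruct n as [|[|n]]; [unfold a; simpl; lra | | lia].
    destruct a_small as [-> _]. simpl. lra.
Qed.

Lemma Int_part_le x z : x < IZR z + 1 -> (Int_part x <= z)%Z.
Proof.
  intros H. destruct (base_Int_part x).
  assert (IZR (Int_part x) < IZR (z + 1)) by (rewrite plus_IZR; lra).
  apply lt_IZR in H2. lia.
Qed.

Lemma le_Int_part x z : IZR z <= x -> (z <= Int_part x)%Z.
Proof.
  intros H. destruct (base_Int_part x).
  assert (IZR (z - 1) < IZR (Int_part x)) by (rewrite minus_IZR; lra).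
  apply lt_IZR in H2. lia.
Qed.

Theorem proposition6 : forall n : nat,
  (floorR ((phi + 2) / 5 * INR n) <= a n <= floorR (phi * INR n))%Z.
Proof.
  intros n. unfold floorR. split.
  - apply Int_part_le. fold theta. pose proof (a_lower n). lra.
  - apply le_Int_part, a_upper.
Qed.
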